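(* Let $\delta>0$ and consider the boundary value problem $$\phi''(x)-\delta\, e^{-\phi(x)}=0,\quad 0<x<1,\qquad \phi'(0)=0,\qquad \phi(1)=0,$$ for a twice continuously differentiable function $\phi:[0,1]\to\mathbb{R}$. Let $\delta_c\approx 0.878$ be the unique positive number satisfying $$1=\sqrt{\frac{\delta_c}{2}}\,\sinh\!\left(\sqrt{\frac{\delta_c+2}{2}}\right).$$ Then the problem has exactly two solutions if $0<\delta<\delta_c$, exactly one solution if $\delta=\delta_c$, and no solution if $\delta>\delta_c$. Every solution has the form $\phi(x)=\phi_0+2\ln\cosh\!\left(\sqrt{\tfrac{\delta}{2}}\,e^{-\phi_0/2}x\right)$, where $\phi_0=\phi(0)$ satisfies $e^{-\phi_0/2}=\cosh\!\left(\sqrt{\tfrac{\delta}{2}}\,e^{-\phi_0/2}\right)$.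
   Context: This is the non-dimensionalized steady-state equation for the liquid (ionic) potential in a one-dimensional molten carbonate fuel cell cathode, with the solid potential, porosity and gas concentrations taken constant, so that $\delta=\frac{\nu L^2}{\sigma_l\epsilon_l^b}\frac{RT}{n\alpha F}i_0 c_{O_2}c_{CO_2}e^{\bar\phi_s}$ is inversely proportional to the liquid conductivity $\sigma_l$; the condition $\phi'(0)=0$ is a no-flux condition and $\phi(1)=0$ a Dirichlet condition. Consequently, for sufficiently small liquid conductivity no steady state exists. *)

From Stdlib Require Import Reals.
Open Scope R_scope.

Definition I01 (y : R) : Prop := 0 <= y <= 1.

Definition deriv01 (f : R -> R) (x l : R) : Prop :=
  limit1_in (fun y => (f y - f x) / (y - x)) (fun y => I01 y /\ y <> x) l x.

(* phi : [0,1] -> R (values outside [0,1] irrelevant) is a C^2 solution of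
   phi'' - delta e^{-phi} = 0 on (0,1), phi'(0) = 0, phi(1) = 0.
   phi1, phi2 are its first and second derivatives on [0,1]. *)
Definition bvp_solution (delta : R) (phi : R -> R) : Prop :=
  exists phi1 phi2 : R -> R,
    (forall x, I01 x ->
       deriv01 phi x (phi1 x) /\ deriv01 phi1 x (phi2 x) /\
       limit1_in phi2 I01 (phi2 x) x) /\
    (forall x, 0 < x < 1 -> phi2 x - delta * exp (- phi x) = 0) /\
    phi1 0 = 0 /\ phi 1 = 0.

Definition eq01 (f g : R -> R) : Prop := forall x, I01 x -> f x = g x.

Definition exactly_two_solutions (delta : R) : Prop :=
  exists f g, bvp_solution delta f /\ bvp_solution delta g /\ ~ eq01 f g /\
    forall h, bvp_solution delta h -> eq01 h f \/ eq01 h g.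

Definition exactly_one_solution (delta : R) : Prop :=
  exists f, bvp_solution delta f /\
    forall h, bvp_solution delta h -> eq01 h f.

Definition no_solution (delta : R) : Prop :=
  forall h, ~ bvp_solution delta h.

(* Multiplying the equation by phi' gives the first integral
   phi'^2 + 2 delta e^(-phi) = 2 delta e^(-phi(0)), so u = e^(phi/2) solves u'' = a^2 u with
   a = sqrt(delta/2) e^(-phi(0)/2) and u'(0) = 0; hence u = u(0) cosh(a x), which is the stated
   form.  With s = e^(-phi(0)/2) and c = sqrt(delta/2), the condition phi(1) = 0 becomes
   cosh(c s) = s, and conversely every positive root s gives a solution.  By strict convexity
   of cosh there are at most two roots.  The equation defining delta_c says that the line
   t / c_c, with c_c = sqrt(delta_c/2), is tangent to cosh at t_c = sqrt((delta_c+2)/2)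
   (since t_c^2 = c_c^2 + 1); so there are two roots, one or none according as c < c_c,
   c = c_c or c > c_c. *)

From Stdlib Require Import Reals Lra.
From Coquelicot Require Import Coquelicot.
Open Scope R_scope.

Lemma cosh_pos t : 0 < cosh t.
Proof. unfold cosh; pose proof (exp_pos t); pose proof (exp_pos (- t)); lra. Qed.

Lemma cosh_above_tangent a t : t <> a -> cosh a + sinh a * (t - a) < cosh t.
Proof.
  intros Hne. unfold cosh, sinh.
  replace t with (a + (t - a)) at 2 3 by ring.
  set (e := t - a). assert (He : e <> 0) by (unfold e; lra).
  rewrite exp_plus. replace (- (a + e)) with (- a + - e) by ring. rewrite exp_plus.
  pose proof (exp_ineq1 e He). pose proof (exp_ineq1 (- e) ltac:(lra)).
  pose proof (exp_pos a). pose proof (exp_pos (- a)).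
  set (A := exp a) in *. set (B := exp (- a)) in *. set (X := exp e) in *. set (Y := exp (- e)) in *.
  assert (0 < A * (X - 1 - e)) by (apply Rmult_lt_0_compat; lra).
  assert (0 < B * (Y - 1 + e)) by (apply Rmult_lt_0_compat; lra).
  lra.
Qed.

Lemma cosh_increasing_nonneg a b : 0 <= a -> a < b -> cosh a < cosh b.
Proof.
  intros Ha Hab. assert (Hsinh : 0 <= sinh a).
  { destruct Ha as [Ha| <-]; [left; rewrite <- sinh_0; apply sinh_lt, Ha | right; symmetry; apply sinh_0]. }
  pose proof (cosh_above_tangent a b ltac:(lra)). nra.
Qed.

Lemma cosh_gt_sq y : 0 <= y -> y * y / 8 < cosh y.
Proof.
  intros Hy. unfold cosh.
  assert (Hexp : exp y = exp (y / 2) * exp (y / 2)) by (rewrite <- exp_plus; f_equal; field).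
  pose proof (exp_ineq1_le (y / 2)). pose proof (exp_pos (- y)).
  nra.
Qed.

Lemma cosh_sq_sinh_sq t : cosh t * cosh t = 1 + sinh t * sinh t.
Proof.
  assert (Hinv : exp t * exp (- t) = 1) by (rewrite <- exp_plus, Rplus_opp_r; apply exp_0).
  unfold cosh, sinh. nra.
Qed.

(* Extending a function on [0,1] by its endpoint values turns the one-sided calculus of
   [deriv01] into ordinary calculus on R at interior points. *)
Definition clamp01 (y : R) : R := Rmax 0 (Rmin 1 y).

Lemma clamp01_I01 y : I01 (clamp01 y).
Proof. unfold clamp01, I01, Rmax, Rmin; destruct (Rle_dec 1 y), (Rle_dec 0 _); lra. Qed.

Lemma clamp01_id x : I01 x -> clamp01 x = x.
Proof. unfold clamp01, I01, Rmax, Rmin; intros; destruct (Rle_dec 1 x), (Rle_dec 0 _); lra. Qed.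

Lemma clamp01_dist x y : I01 x -> Rabs (clamp01 y - x) <= Rabs (y - x).
Proof.
  unfold clamp01, I01, Rmax, Rmin; intros.
  destruct (Rle_dec 1 y), (Rle_dec 0 _); unfold Rabs; repeat destruct Rcase_abs; lra.
Qed.

Lemma deriv01_limit1_in f x l : deriv01 f x l -> limit1_in f I01 (f x) x.
Proof.
  intros H eps Heps.
  destruct (H 1 Rlt_0_1) as [alp [Halp Hq]].
  assert (Hl : 0 < Rabs l + 1) by (pose proof (Rabs_pos l); lra).
  exists (Rmin alp (eps / (Rabs l + 1))); split.
  { apply Rmin_pos; [lra | apply Rdiv_lt_0_compat; lra]. }
  intros y [Hy Hd]; simpl in *; unfold R_dist in *.
  destruct (Req_dec y x) as [->|Hne]; [rewrite Rminus_diag, Rabs_R0; lra|].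
  specialize (Hq y (conj (conj Hy Hne) (Rlt_le_trans _ _ _ Hd (Rmin_l _ _)))).
  simpl in Hq; unfold R_dist in Hq.
  assert (Hslope : Rabs ((f y - f x) / (y - x)) <= Rabs l + 1).
  { pose proof (Rabs_triang_inv ((f y - f x) / (y - x)) l); lra. }
  assert (Hyx : Rabs (y - x) * (Rabs l + 1) < eps).
  { apply Rlt_le_trans with (eps / (Rabs l + 1) * (Rabs l + 1)).
    - apply Rmult_lt_compat_r; [lra|]. exact (Rlt_le_trans _ _ _ Hd (Rmin_r _ _)).
    - right; field; lra. }
  replace (f y - f x) with ((f y - f x) / (y - x) * (y - x)) by (field; lra).
  rewrite Rabs_mult.
  pose proof (Rabs_pos (y - x)); nra.
Qed.

Lemma continuous_clamp01 f x : I01 x -> limit1_in f I01 (f x) x ->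
  continuous (fun y => f (clamp01 y)) x.
Proof.
  intros Hx H. apply continuity_pt_filterlim. intros eps Heps.
  destruct (H eps Heps) as [alp [Halp Hf]].
  exists alp; split; [exact Halp|]. intros y [_ Hy]; simpl in *; unfold R_dist in *.
  rewrite (clamp01_id x Hx). apply Hf; split; [apply clamp01_I01|].
  pose proof (clamp01_dist x y Hx); lra.
Qed.

Lemma deriv01_is_derive_clamp01 f x l : 0 < x < 1 -> deriv01 f x l ->
  is_derive (fun y => f (clamp01 y)) x l.
Proof.
  intros Hx H. apply is_derive_Reals. intros eps Heps.
  destruct (H eps Heps) as [alp [Halp Hq]].
  assert (Hr : 0 < Rmin alp (Rmin x (1 - x))) by (repeat apply Rmin_pos; lra).
  exists (mkposreal _ Hr). intros h Hh Hlt; simpl in Hlt.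
  pose proof (Rmin_l alp (Rmin x (1 - x))); pose proof (Rmin_r alp (Rmin x (1 - x))).
  pose proof (Rmin_l x (1 - x)); pose proof (Rmin_r x (1 - x)).
  assert (Hxh : I01 (x + h)) by (unfold I01; unfold Rabs in Hlt; destruct Rcase_abs; lra).
  rewrite (clamp01_id _ Hxh), (clamp01_id x) by (unfold I01; lra).
  specialize (Hq (x + h)); simpl in Hq; unfold R_dist in Hq.
  replace (x + h - x) with h in Hq by ring. apply Hq. split; [split; [exact Hxh | lra] | lra].
Qed.

Lemma is_derive_deriv01 f x l : is_derive f x l -> deriv01 f x l.
Proof.
  intros H%is_derive_Reals eps Heps. destruct (H eps Heps) as [alp Hq].
  exists alp; split; [apply cond_pos|]. intros y [[_ Hne] Hy]; simpl in *; unfold R_dist in *.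
  specialize (Hq (y - x)). replace (x + (y - x)) with y in Hq by ring. apply Hq; lra.
Qed.

Lemma continuous_limit1_in01 f x : continuous f x -> limit1_in f I01 (f x) x.
Proof.
  intros H%continuity_pt_filterlim eps Heps. destruct (H eps Heps) as [alp [Halp Hf]].
  exists alp; split; [exact Halp|]. intros y [_ Hy].
  destruct (Req_dec y x) as [->|Hne].
  - simpl; unfold R_dist; rewrite Rminus_diag, Rabs_R0; lra.
  - apply Hf; repeat split; auto.
Qed.

Lemma derive0_const01 F : (forall x, 0 < x < 1 -> is_derive F x 0) ->
  (forall x, I01 x -> continuous F x) -> forall x, I01 x -> F x = F 0.
Proof.
  intros Hd Hc x [Hx0 Hx1]. destruct (Req_dec x 0) as [->|Hne]; [reflexivity|].
  destruct (MVT_gen F 0 x (fun _ => 0)) as [c [_ Hdiff]].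
  - rewrite Rmin_left, Rmax_right by lra. intros y Hy. apply Hd; lra.
  - rewrite Rmin_left, Rmax_right by lra. intros y Hy.
    apply continuity_pt_filterlim, Hc. unfold I01; lra.
  - lra.
Qed.

Section FirstIntegral.

Variables (d : R) (P P1 P2 : R -> R).
Hypothesis d_pos : 0 < d.
Hypothesis P_deriv : forall x, 0 < x < 1 -> is_derive P x (P1 x).
Hypothesis P1_deriv : forall x, 0 < x < 1 -> is_derive P1 x (P2 x).
Hypothesis P_cont : forall x, I01 x -> continuous P x.
Hypothesis P1_cont : forall x, I01 x -> continuous P1 x.
Hypothesis P_ode : forall x, 0 < x < 1 -> P2 x = d * exp (- P x).
Hypothesis P1_0 : P1 0 = 0.

Lemma energy_conserved x : I01 x ->
  P1 x ^ 2 + 2 * d * exp (- P x) = 2 * d * exp (- P 0).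
Proof.
  intros Hx.
  rewrite (derive0_const01 (fun y => P1 y ^ 2 + 2 * d * exp (- P y))); [| | |exact Hx].
  { rewrite P1_0; ring. }
  - intros y Hy.
    assert (HP := P_deriv y Hy); assert (HP1 := P1_deriv y Hy).
    auto_derive.
    + split; [exists (P2 y)|split; [exists (P1 y)|]]; auto.
    + replace (Derive (fun t => P t) y) with (P1 y) by (symmetry; exact (is_derive_unique _ _ _ HP)).
      replace (Derive (fun t => P1 t) y) with (P2 y) by (symmetry; exact (is_derive_unique _ _ _ HP1)).
      rewrite P_ode by exact Hy; ring.
  - intros y Hy.
    apply (continuous_plus (fun y => P1 y ^ 2)).
    + apply (continuous_mult P1 (fun y => P1 y ^ 1)); [auto|].
      apply (continuous_mult P1 (fun _ => 1)); [auto | apply continuous_const].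
    + apply (continuous_mult (fun _ => 2 * d)); [apply continuous_const|].
      apply continuous_exp_comp, (continuous_opp P); auto.
Qed.

(* This is (u' + b u) e^(-b x) for u = exp (P / 2), which solves u'' = b^2 u. *)
Lemma shifted_invariant b : b * b = d / 2 * exp (- P 0) -> forall x, I01 x ->
  (P1 x / 2 + b) * exp (P x / 2 - b * x) = b * exp (P 0 / 2).
Proof.
  intros Hb x Hx.
  rewrite (derive0_const01 (fun y => (P1 y / 2 + b) * exp (P y / 2 - b * y))); [| | |exact Hx].
  { rewrite P1_0, Rmult_0_r, Rminus_0_r; field. }
  - intros y Hy.
    assert (HP := P_deriv y Hy); assert (HP1 := P1_deriv y Hy).
    assert (HE := energy_conserved y ltac:(unfold I01; lra)).
    auto_derive.
    + split; [exists (P2 y)|split; [exists (P1 y)|]]; auto.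
    + replace (Derive (fun t => P t) y) with (P1 y) by (symmetry; exact (is_derive_unique _ _ _ HP)).
      replace (Derive (fun t => P1 t) y) with (P2 y) by (symmetry; exact (is_derive_unique _ _ _ HP1)).
      (* the derivative is [exp (P/2 - b y) * (P2/2 + P1^2/4 - b^2)], which the first integral kills *)
      set (e := exp _).
      transitivity (e * (P2 y / 2 + P1 y ^ 2 / 4 - b * b)); [field|].
      rewrite P_ode, Hb by exact Hy.
      replace (P1 y ^ 2) with (2 * d * exp (- P 0) - 2 * d * exp (- P y)) by lra.
      field.
  - intros y Hy.
    apply (continuous_mult (fun y => P1 y / 2 + b)).
    + apply (continuous_plus (fun y => P1 y / 2)); [|apply continuous_const].
      apply (continuous_mult P1 (fun _ => / 2)); [auto | apply continuous_const].
    + apply continuous_exp_comp, (continuous_minus (fun y => P y / 2)).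
      * apply (continuous_mult P (fun _ => / 2)); [auto | apply continuous_const].
      * apply (continuous_mult (fun _ => b)); [apply continuous_const | apply continuous_id].
Qed.

Lemma exp_half_cosh x : I01 x ->
  exp (P x / 2) = exp (P 0 / 2) * cosh (sqrt (d / 2) * exp (- P 0 / 2) * x).
Proof.
  intros Hx. set (a := sqrt (d / 2) * exp (- P 0 / 2)).
  assert (Ha : 0 < a) by (apply Rmult_lt_0_compat; [apply sqrt_lt_R0; lra | apply exp_pos]).
  assert (Haa : a * a = d / 2 * exp (- P 0)).
  { unfold a. replace (sqrt (d / 2) * exp (- P 0 / 2) * (sqrt (d / 2) * exp (- P 0 / 2)))
      with (sqrt (d / 2) * sqrt (d / 2) * exp (- P 0 / 2 + - P 0 / 2)) by (rewrite exp_plus; ring).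
    rewrite sqrt_sqrt by lra. do 3 f_equal. field. }
  assert (Hplus := shifted_invariant a Haa x Hx).
  assert (Hminus := shifted_invariant (- a) ltac:(rewrite <- Haa; ring) x Hx).
  unfold Rminus in Hplus, Hminus. rewrite !exp_plus in Hplus, Hminus.
  replace (- (- a * x)) with (a * x) in Hminus by ring.
  assert (Hinv : exp (a * x) * exp (- (a * x)) = 1) by (rewrite <- exp_plus, Rplus_opp_r; apply exp_0).
  unfold cosh. set (p := P1 x / 2) in *. set (X := exp (P x / 2)) in *.
  set (E := exp (a * x)) in *. set (F := exp (- (a * x))) in *.
  assert (Hp : (p + a) * X = a * exp (P 0 / 2) * E).
  { rewrite <- Hplus. transitivity ((p + a) * X * (E * F)); [rewrite Hinv|]; ring. }
  assert (Hm : (p - a) * X = - a * exp (P 0 / 2) * F).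
  { rewrite <- Hminus. transitivity ((p - a) * X * (E * F)); [rewrite Hinv|]; ring. }
  apply Rmult_eq_reg_l with (2 * a); [|lra].
  replace (2 * a * X) with ((p + a) * X - (p - a) * X) by ring.
  rewrite Hp, Hm; field.
Qed.

Lemma first_integral_form x : I01 x ->
  P x = P 0 + 2 * ln (cosh (sqrt (d / 2) * exp (- P 0 / 2) * x)).
Proof.
  intros Hx.
  replace (P x) with (2 * ln (exp (P x / 2))) by (rewrite ln_exp; field).
  rewrite exp_half_cosh, ln_mult, ln_exp by (auto using exp_pos, cosh_pos).
  field.
Qed.

End FirstIntegral.

Lemma bvp_solution_form d phi : 0 < d -> bvp_solution d phi -> forall x, I01 x ->
  phi x = phi 0 + 2 * ln (cosh (sqrt (d / 2) * exp (- phi 0 / 2) * x)).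
Proof.
  intros Hd [phi1 [phi2 [Hreg [Hode [Hphi1_0 _]]]]] x Hx.
  assert (I01_0 : I01 0) by (unfold I01; lra).
  assert (Hint : forall y, 0 < y < 1 -> I01 y) by (unfold I01; intros; lra).
  set (ext := fun f y => f (clamp01 y) : R).
  assert (Hext : forall f y, I01 y -> ext f y = f y) by (intros; apply (f_equal f), clamp01_id; auto).
  rewrite <- !(Hext phi) by auto.
  apply (first_integral_form d (ext phi) (ext phi1) (ext phi2)); auto.
  - intros y Hy. rewrite Hext by auto.
    apply deriv01_is_derive_clamp01; [exact Hy | apply Hreg; auto].
  - intros y Hy. rewrite Hext by auto.
    apply deriv01_is_derive_clamp01; [exact Hy | apply Hreg; auto].
  - intros y Hy. apply continuous_clamp01; [exact Hy|].
    apply (deriv01_limit1_in _ _ (phi1 y)), Hreg, Hy.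
  - intros y Hy. apply continuous_clamp01; [exact Hy|].
    apply (deriv01_limit1_in _ _ (phi2 y)), Hreg, Hy.
  - intros y Hy. rewrite !Hext by auto. specialize (Hode y Hy); lra.
  - rewrite Hext; auto.
Qed.

Definition cosh_root (c s : R) : Prop := 0 < s /\ cosh (c * s) = s.

Definition bvp_profile (d s x : R) : R := -2 * ln s + 2 * ln (cosh (sqrt (d / 2) * s * x)).

Lemma bvp_profile_0 d s : bvp_profile d s 0 = -2 * ln s.
Proof. unfold bvp_profile. rewrite Rmult_0_r, cosh_0, ln_1. ring. Qed.

Lemma bvp_profile_solution d s : 0 <= d -> cosh_root (sqrt (d / 2)) s ->
  bvp_solution d (bvp_profile d s).
Proof.
  intros Hd [Hs Hroot]. set (k := sqrt (d / 2) * s).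
  assert (Hkk : k ^ 2 = d / 2 * s ^ 2).
  { unfold k. rewrite Rpow_mult_distr, pow2_sqrt by lra. reflexivity. }
  assert (Hc := fun x => cosh_pos (k * x)).
  exists (fun x => 2 * k * sinh (k * x) / cosh (k * x)), (fun x => 2 * k ^ 2 / cosh (k * x) ^ 2).
  assert (Hd2 : forall x, is_derive (fun x => 2 * k ^ 2 / cosh (k * x) ^ 2) x
                   (- 4 * k ^ 3 * sinh (k * x) / cosh (k * x) ^ 3)).
  { intros x. specialize (Hc x). unfold cosh, sinh in Hc |- *. auto_derive.
    - apply Rgt_not_eq; nra.
    - set (E := exp (k * x)) in *. set (F := exp (- (k * x))) in *. field. lra. }
  split; [intros x _; split; [|split] | split; [intros x _ | split]].
  - apply is_derive_deriv01. unfold bvp_profile; fold k.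
    specialize (Hc x). unfold cosh, sinh in Hc |- *. auto_derive.
    + lra.
    + set (E := exp (k * x)) in *. set (F := exp (- (k * x))) in *. field. lra.
  - apply is_derive_deriv01.
    assert (HEF : exp (k * x) * exp (- (k * x)) = 1).
    { rewrite <- exp_plus, Rplus_opp_r. apply exp_0. }
    specialize (Hc x). unfold cosh, sinh in Hc |- *. auto_derive.
    + lra.
    + set (E := exp (k * x)) in *. set (F := exp (- (k * x))) in *.
      transitivity (2 * k ^ 2 * (E * F) / ((E + F) / 2) ^ 2); [field; lra|].
      rewrite HEF, Rmult_1_r. reflexivity.
  - apply (continuous_limit1_in01 (fun x => 2 * k ^ 2 / cosh (k * x) ^ 2)).
    exact (ex_derive_continuous _ _ (ex_intro _ _ (Hd2 x))).
  - unfold bvp_profile; fold k.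
    specialize (Hc x). set (C := cosh (k * x)) in *.
    assert (HsC : 0 < s / C) by (apply Rdiv_lt_0_compat; auto).
    replace (- (-2 * ln s + 2 * ln C)) with (ln (s / C) + ln (s / C))
      by (rewrite ln_div by auto; ring).
    rewrite exp_plus, exp_ln, Hkk by exact HsC. field. lra.
  - unfold sinh. rewrite Rmult_0_r, Ropp_0. field. apply Rgt_not_eq, cosh_pos.
  - unfold bvp_profile. rewrite Rmult_1_r, Hroot. ring.
Qed.

Lemma cosh_root_not_three c s1 s2 s3 : 0 < c ->
  cosh_root c s1 -> cosh_root c s2 -> cosh_root c s3 -> s1 < s2 < s3 -> False.
Proof.
  intros Hc [_ H1] [_ H2] [_ H3] [H12 H23].
  (* the points (c s_i, s_i) are collinear, but the outer two lie strictly above the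
     tangent to cosh at the middle one *)
  assert (T1 := cosh_above_tangent (c * s2) (c * s1) ltac:(nra)).
  assert (T3 := cosh_above_tangent (c * s2) (c * s3) ltac:(nra)).
  rewrite H1, H2 in T1. rewrite H2, H3 in T3. nra.
Qed.

Lemma cosh_root_at_most_two c x y z : 0 < c ->
  cosh_root c x -> cosh_root c y -> cosh_root c z -> x <> y -> z = x \/ z = y.
Proof.
  intros Hc.
  assert (Hlt : forall x y, x < y -> cosh_root c x -> cosh_root c y -> cosh_root c z ->
            z = x \/ z = y).
  { clear x y. intros x y Hxy Hx Hy Hz.
    destruct (Rtotal_order z x) as [Hzx|[Hzx|Hzx]]; [exfalso | now left |].
    - apply (cosh_root_not_three c z x y); auto.
    - destruct (Rtotal_order z y) as [Hzy|[Hzy|Hzy]]; [exfalso | now right | exfalso].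
      + apply (cosh_root_not_three c x z y); auto.
      + apply (cosh_root_not_three c x y z); auto. }
  intros Hx Hy Hz Hxy.
  destruct (Rtotal_order x y) as [H|[H|H]]; [auto | contradiction |].
  destruct (Hlt y x) as [E|E]; auto.
Qed.

Lemma cosh_roots_exist c s0 : 0 < c -> 0 < s0 -> cosh (c * s0) < s0 ->
  exists s1 s2, cosh_root c s1 /\ cosh_root c s2 /\ s1 < s2.
Proof.
  intros Hc Hs0 Hlow.
  assert (Hcont : forall k, continuity (fun s => k * (s - cosh (c * s)))).
  { intros k. reg. }
  destruct (IVT (fun s => 1 * (s - cosh (c * s))) 0 s0 (Hcont 1) Hs0) as [s1 [Hs1 E1]].
  { rewrite Rmult_0_r, cosh_0. lra. }
  { lra. }
  set (S := s0 + 8 / (c * c)).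
  assert (Hhigh : S < cosh (c * S)).
  { assert (H8 : 0 < 8 / (c * c)) by (apply Rdiv_lt_0_compat; nra).
    assert (HS : c * c * S >= 8).
    { unfold S. replace (c * c * (s0 + 8 / (c * c))) with (c * c * s0 + 8) by (field; lra). nra. }
    pose proof (cosh_gt_sq (c * S) ltac:(unfold S; nra)). nra. }
  destruct (IVT (fun s => -1 * (s - cosh (c * s))) s0 S (Hcont (-1))) as [s2 [Hs2 E2]].
  { unfold S. assert (0 < 8 / (c * c)) by (apply Rdiv_lt_0_compat; nra). lra. }
  { lra. }
  { lra. }
  assert (Hs1_pos : 0 < s1).
  { destruct Hs1 as [[H|<-] _]; [exact H|]. rewrite Rmult_0_r, cosh_0 in E1. lra. }
  assert (s1 <> s0) by (intros ->; lra).
  assert (s2 <> s0) by (intros ->; lra).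
  exists s1, s2. repeat split; lra.
Qed.

Section Critical.

Variable dc : R.
Hypothesis dc_pos : 0 < dc.
Hypothesis dc_critical : 1 = sqrt (dc / 2) * sinh (sqrt ((dc + 2) / 2)).

Let cc := sqrt (dc / 2).
Let tc := sqrt ((dc + 2) / 2).

Let cc_pos : 0 < cc.
Proof. apply sqrt_lt_R0; lra. Qed.

Let tc_pos : 0 < tc.
Proof. apply sqrt_lt_R0; lra. Qed.

(* With [sinh tc = 1 / cc], the tangent to [cosh] at [tc] is the line [t / cc]. *)
Lemma critical_tangency : cc * cosh tc = tc.
Proof.
  assert (Hsq : tc * tc = cc * cc + 1) by (unfold tc, cc; rewrite !sqrt_sqrt by lra; field).
  assert (E : (cc * cosh tc) * (cc * cosh tc) = tc * tc).
  { transitivity (cc * cc * (cosh tc * cosh tc)); [ring|].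
    rewrite cosh_sq_sinh_sq, Hsq.
    transitivity (cc * cc + (cc * sinh tc) * (cc * sinh tc)); [ring|].
    assert (Hsinh : cc * sinh tc = 1) by (symmetry; exact dc_critical).
    rewrite Hsinh. ring. }
  pose proof tc_pos.
  assert (0 < cc * cosh tc) by (apply Rmult_lt_0_compat; [apply cc_pos | apply cosh_pos]).
  nra.
Qed.

Lemma line_below_cosh_critical t : t <> tc -> t < cc * cosh t.
Proof.
  intros Hne. pose proof cc_pos.
  assert (Hsinh : cc * sinh tc = 1) by (symmetry; exact dc_critical).
  pose proof (cosh_above_tangent tc t Hne).
  (* [cc] times the tangent at [tc] is [cc * cosh tc + (t - tc) = t] *)
  apply Rle_lt_trans with (cc * (cosh tc + sinh tc * (t - tc))).
  - rewrite Rmult_plus_distr_l, critical_tangency, <- Rmult_assoc, Hsinh. lra.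
  - apply Rmult_lt_compat_l; lra.
Qed.

Lemma line_below_cosh_critical_le t : t <= cc * cosh t.
Proof.
  destruct (Req_dec t tc) as [->|Hne].
  - rewrite critical_tangency; lra.
  - left; apply line_below_cosh_critical, Hne.
Qed.

Lemma no_cosh_root_above_critical c s : cc < c -> ~ cosh_root c s.
Proof.
  intros Hc [Hs Hroot]. pose proof cc_pos.
  pose proof (line_below_cosh_critical_le (c * s)). rewrite Hroot in *. nra.
Qed.

Lemma cosh_root_critical s : cosh_root cc s <-> s = tc / cc.
Proof.
  pose proof cc_pos; pose proof tc_pos. split.
  - intros [Hs Hroot]. destruct (Req_dec (cc * s) tc) as [E|Hne].
    + rewrite <- E. field. lra.
    + pose proof (line_below_cosh_critical (cc * s) Hne). rewrite Hroot in *. lra.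
  - intros ->. split; [apply Rdiv_lt_0_compat; lra|].
    replace (cc * (tc / cc)) with tc by (field; lra).
    rewrite <- critical_tangency at 2. field. lra.
Qed.

Lemma cosh_roots_below_critical c : 0 < c -> c < cc ->
  exists s1 s2, cosh_root c s1 /\ cosh_root c s2 /\ s1 < s2.
Proof.
  intros Hc Hcc. pose proof cc_pos; pose proof tc_pos.
  apply (cosh_roots_exist c (tc / cc)); [exact Hc | apply Rdiv_lt_0_compat; lra |].
  (* below the critical slope, [cosh] dips under the line [s] at [s = tc / cc] *)
  apply Rlt_le_trans with (cosh tc).
  - apply cosh_increasing_nonneg.
    + apply Rmult_le_pos; [lra | left; apply Rdiv_lt_0_compat; lra].
    + apply Rlt_le_trans with (cc * (tc / cc)); [apply Rmult_lt_compat_r|];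
        [apply Rdiv_lt_0_compat; lra | exact Hcc | right; field; lra].
  - right. rewrite <- critical_tangency at 2. field. lra.
Qed.

End Critical.

Lemma bvp_solution_root d phi : 0 < d -> bvp_solution d phi ->
  cosh_root (sqrt (d / 2)) (exp (- phi 0 / 2)) /\ eq01 phi (bvp_profile d (exp (- phi 0 / 2))).
Proof.
  intros Hd Hsol. assert (Hform := bvp_solution_form d phi Hd Hsol).
  assert (Hphi1 : phi 1 = 0) by (destruct Hsol as (_ & _ & _ & _ & _ & H); exact H).
  split; [split; [apply exp_pos|] | intros x Hx].
  - specialize (Hform 1 ltac:(unfold I01; lra)). rewrite Hphi1, Rmult_1_r in Hform.
    rewrite <- (exp_ln (cosh _)) by apply cosh_pos. f_equal. lra.
  - rewrite (Hform x Hx). unfold bvp_profile. rewrite ln_exp. field.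
Qed.

Lemma bvp_profile_inj d s1 s2 : 0 < s1 -> 0 < s2 ->
  eq01 (bvp_profile d s1) (bvp_profile d s2) -> s1 = s2.
Proof.
  intros Hs1 Hs2 Heq. specialize (Heq 0 ltac:(unfold I01; lra)).
  rewrite !bvp_profile_0 in Heq. apply ln_inv; auto. lra.
Qed.

Theorem mainTheorem1 :
  forall delta_c : R,
    0 < delta_c ->
    1 = sqrt (delta_c / 2) * sinh (sqrt ((delta_c + 2) / 2)) ->
  forall delta : R, 0 < delta ->
    (delta < delta_c -> exactly_two_solutions delta) /\
    (delta = delta_c -> exactly_one_solution delta) /\
    (delta_c < delta -> no_solution delta) /\
    (forall phi : R -> R, bvp_solution delta phi ->
       exp (- phi 0 / 2) = cosh (sqrt (delta / 2) * exp (- phi 0 / 2)) /\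
       forall x, I01 x ->
         phi x = phi 0 + 2 * ln (cosh (sqrt (delta / 2) * exp (- phi 0 / 2) * x))).
Proof.
  intros dc Hdc Hcrit d Hd.
  assert (Hc : 0 < sqrt (d / 2)) by (apply sqrt_lt_R0; lra).
  assert (Hmono : forall a b, 0 < a -> a < b -> sqrt (a / 2) < sqrt (b / 2))
    by (intros; apply sqrt_lt_1; lra).
  split; [|split; [|split]].
  - intros Hlt.
    destruct (cosh_roots_below_critical dc Hdc Hcrit (sqrt (d / 2)) Hc (Hmono d dc Hd Hlt))
      as (s1 & s2 & Hr1 & Hr2 & H12).
    exists (bvp_profile d s1), (bvp_profile d s2).
    repeat split; try (apply bvp_profile_solution; auto; lra).
    + intros Heq. apply bvp_profile_inj in Heq; [lra | apply Hr1 | apply Hr2].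
    + intros h Hh. destruct (bvp_solution_root d h Hd Hh) as [Hr Heq].
      destruct (cosh_root_at_most_two _ s1 s2 _ Hc Hr1 Hr2 Hr ltac:(lra)) as [E|E];
        [left | right]; rewrite <- E; exact Heq.
  - intros ->. set (s := sqrt ((dc + 2) / 2) / sqrt (dc / 2)).
    assert (Hs : cosh_root (sqrt (dc / 2)) s) by (apply cosh_root_critical; auto).
    exists (bvp_profile dc s). split; [apply bvp_profile_solution; [lra | exact Hs]|].
    intros h Hh. destruct (bvp_solution_root dc h Hdc Hh) as [Hr Heq].
    apply (cosh_root_critical dc Hdc Hcrit) in Hr. rewrite Hr in Heq. exact Heq.
  - intros Hgt h Hh. destruct (bvp_solution_root d h Hd Hh) as [Hr _].
    exact (no_cosh_root_above_critical dc Hdc Hcrit _ _ (Hmono dc d Hdc Hgt) Hr).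
  - intros phi Hphi. destruct (bvp_solution_root d phi Hd Hphi) as [[_ Hr] _].
    split; [symmetry; exact Hr | apply bvp_solution_form; auto].
Qed.
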